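(* For two swm-graphs $G$ and $H$, the thickening of the Cartesian product equals the strong product of the thickenings: $(G\times H)^{\varDelta}=G^{\varDelta}\otimes H^{\varDelta}$.
   Context: Graphs are connected, simple, undirected, possibly infinite; $d$ is the shortest-path metric. Weakly modular graph: (TC) for vertices $x,y,z$ with $d(x,y)=1$ and $d(x,z)=d(y,z)$ there is a common neighbor $u$ of $x,y$ with $d(u,z)=d(x,z)-1$; (QC) for $x,y,w,z$ with $d(x,y)=2$, $d(w,x)=d(w,y)=1$, $d(w,z)-1=d(x,z)=d(y,z)$ there is a common neighbor $u$ of $x,y$ with $d(u,z)=d(x,z)-1$. An swm-graph is a weakly modular graph with no induced $K_4^-$ and no isometric $K_{3,3}^-$ subgraph ($K_4$, $K_{3,3}$ minus one edge). A nonempty vertex set $X$ is gated if for every vertex $x$ there is $y\in X$ with $d(x,z)=d(x,y)+d(y,z)$ for all $z\in X$; it is Boolean-gated if it is gated and induces a connected thick subgraph (any two vertices at distance 2 have two common neighbors at distance 2 from each other). The thickening $G^{\varDelta}$ is obtained from $G$ by joining every pair of distinct vertices lying in a common Boolean-gated set. The Cartesian product $G\times H$ has vertex set $V(G)\times V(H)$ with $(x,y)\sim(x',y')$ iff ($x=x'$ and $yy'\in E(H)$) or ($y=y'$ and $xx'\in E(G)$). The strong product $G\otimes H$ has vertex set $V(G)\times V(H)$ with distinct $(x,y),(x',y')$ adjacent iff $x,x'$ are equal or adjacent and $y,y'$ are equal or adjacent. *)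

From Stdlib Require Import Arith ClassicalEpsilon.

Section Graphs.
Context {V : Type}.
Implicit Types (adj : V -> V -> Prop).

Inductive walk adj : V -> V -> nat -> Prop :=
| walk_nil : forall x, walk adj x x 0
| walk_cons : forall x z y n, adj x z -> walk adj z y n -> walk adj x y (S n).

(* shortest-path distance (meaningful when x and y are connected) *)
Definition dist adj (x y : V) : nat :=
  epsilon (inhabits 0)
    (fun n => walk adj x y n /\ forall m, walk adj x y m -> n <= m).

Definition simple_graph adj : Prop :=
  (forall x y, adj x y -> adj y x) /\ (forall x, ~ adj x x).

Definition connected adj : Prop := forall x y, exists n, walk adj x y n.

Definition triangle_condition adj : Prop :=
  forall x y z, adj x y -> dist adj x z = dist adj y z ->
    exists u, adj u x /\ adj u y /\ dist adj u z + 1 = dist adj x z.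

Definition quadrangle_condition adj : Prop :=
  forall x y w z, dist adj x y = 2 -> adj w x -> adj w y ->
    dist adj w z = dist adj x z + 1 -> dist adj x z = dist adj y z ->
    exists u, adj u x /\ adj u y /\ dist adj u z + 1 = dist adj x z.

Definition weakly_modular adj : Prop :=
  simple_graph adj /\ connected adj /\
  triangle_condition adj /\ quadrangle_condition adj.

Definition has_induced_K4minus adj : Prop :=
  exists a b c d, a <> b /\ a <> c /\ a <> d /\ b <> c /\ b <> d /\ c <> d /\
    adj a b /\ adj a c /\ adj b c /\ adj b d /\ adj c d /\ ~ adj a d.

(* isometric K33^- : vertices a1 a2 a3 | b1 b2 b3 (edge a1b1 removed) whose
   G-distances equal the distances in K_{3,3} minus an edge *)
Definition has_isometric_K33minus adj : Prop :=
  exists a1 a2 a3 b1 b2 b3,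
    dist adj a1 a2 = 2 /\ dist adj a1 a3 = 2 /\ dist adj a2 a3 = 2 /\
    dist adj b1 b2 = 2 /\ dist adj b1 b3 = 2 /\ dist adj b2 b3 = 2 /\
    dist adj a1 b1 = 3 /\ dist adj a1 b2 = 1 /\ dist adj a1 b3 = 1 /\
    dist adj a2 b1 = 1 /\ dist adj a2 b2 = 1 /\ dist adj a2 b3 = 1 /\
    dist adj a3 b1 = 1 /\ dist adj a3 b2 = 1 /\ dist adj a3 b3 = 1.

Definition swm adj : Prop :=
  weakly_modular adj /\ ~ has_induced_K4minus adj /\ ~ has_isometric_K33minus adj.

Definition gated adj (X : V -> Prop) : Prop :=
  (exists v, X v) /\
  forall x, exists y, X y /\ forall z, X z -> dist adj x z = dist adj x y + dist adj y z.

Definition induced adj (X : V -> Prop) : V -> V -> Prop :=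
  fun u v => X u /\ X v /\ adj u v.

Definition thick_on adj (X : V -> Prop) : Prop :=
  let a := induced adj X in
  forall u v, X u -> X v -> dist a u v = 2 ->
    exists w w', X w /\ X w' /\ a u w /\ a w v /\ a u w' /\ a w' v /\
      dist a w w' = 2.

Definition connected_on adj (X : V -> Prop) : Prop :=
  forall u v, X u -> X v -> exists n, walk (induced adj X) u v n.

Definition boolean_gated adj (X : V -> Prop) : Prop :=
  gated adj X /\ connected_on adj X /\ thick_on adj X.

Definition thickening adj : V -> V -> Prop :=
  fun u v => u <> v /\ exists X, boolean_gated adj X /\ X u /\ X v.

End Graphs.

Definition cartesian {V W : Type} (aG : V -> V -> Prop) (aH : W -> W -> Prop)
  : V * W -> V * W -> Prop :=
  fun p q => (fst p = fst q /\ aH (snd p) (snd q)) \/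
             (snd p = snd q /\ aG (fst p) (fst q)).

Definition strong {V W : Type} (aG : V -> V -> Prop) (aH : W -> W -> Prop)
  : V * W -> V * W -> Prop :=
  fun p q => p <> q /\ (fst p = fst q \/ aG (fst p) (fst q)) /\
             (snd p = snd q \/ aH (snd p) (snd q)).

(* In a Cartesian product of connected graphs the distance is the sum of the
   coordinate distances. Hence a gated set X of G x H is a rectangle X1 x X2
   (if (a, b) and (c, d) lie in X, the gate of (a, d) agrees with a in the first
   coordinate and with d in the second), and the subgraph it induces is the
   Cartesian product of the subgraphs induced by X1 and X2. Gatedness,
   connectivity and thickness then split coordinatewise, so the Boolean-gated
   sets of G x H are exactly the products of Boolean-gated sets of G and H; in a
   square where both coordinates change, the two other corners are the common
   neighbours required by thickness. Two vertices therefore lie in a common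
   Boolean-gated set of G x H iff each pair of coordinates is equal or lies in a
   common Boolean-gated set of its factor. *)

From Stdlib Require Import Lia Wf_nat Classical ClassicalEpsilon
  FunctionalExtensionality PropExtensionality.

Section Walks.
Context {V : Type}.
Implicit Types (A B : V -> V -> Prop) (P : V -> Prop).

Lemma walk0_eq A x y : walk A x y 0 -> x = y.
Proof. intro H. inversion H; reflexivity. Qed.

Lemma walk_cat A x y z n m : walk A x y n -> walk A y z m -> walk A x z (n + m).
Proof.
  induction 1 as [|x z' y' n Hxz _ IH]; intro Hyz; [exact Hyz|].
  exact (walk_cons A x z' z _ Hxz (IH Hyz)).
Qed.

Lemma walk_map {U : Type} A (B : U -> U -> Prop) (f : V -> U) :
  (forall x y, A x y -> B (f x) (f y)) ->
  forall x y n, walk A x y n -> walk B (f x) (f y) n.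
Proof.
  intros Hf x y n H. induction H; [apply walk_nil|]. eapply walk_cons; eauto.
Qed.

Lemma walk_restrict P A B :
  (forall x y, P x -> A x y -> B x y /\ P y) ->
  forall x y n, P x -> walk A x y n -> walk B x y n.
Proof.
  intros HAB x y n Px H. induction H; [apply walk_nil|].
  destruct (HAB _ _ Px H). eapply walk_cons; eauto.
Qed.

Lemma dist_spec A x y n : walk A x y n ->
  walk A x y (dist A x y) /\ forall m, walk A x y m -> dist A x y <= m.
Proof.
  intro H. unfold dist. apply epsilon_spec.
  destruct (dec_inh_nat_subset_has_unique_least_element (walk A x y))
    as [k [Hk _]]; eauto using classic.
Qed.

Lemma dist_walk A x y n : walk A x y n -> walk A x y (dist A x y).
Proof. intro H. apply (dist_spec A x y n H). Qed.

Lemma dist_le A x y n : walk A x y n -> dist A x y <= n.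
Proof. intro H. apply (dist_spec A x y n H), H. Qed.

Lemma dist_least_walk A x y n :
  walk A x y n -> (forall m, walk A x y m -> n <= m) -> dist A x y = n.
Proof.
  intros H Hmin. pose proof (dist_le A x y n H).
  pose proof (Hmin _ (dist_walk A x y n H)). lia.
Qed.

Lemma dist_refl A x : dist A x x = 0.
Proof. pose proof (dist_le A x x 0 (walk_nil A x)). lia. Qed.

Lemma dist_eq0 A x y n : walk A x y n -> dist A x y = 0 -> x = y.
Proof. intros H E. apply (walk0_eq A). rewrite <- E. exact (dist_walk A x y n H). Qed.

Lemma dist_eq1 A x y n : walk A x y n -> dist A x y = 1 -> A x y.
Proof.
  intros H E. pose proof (dist_walk A x y n H) as H1. rewrite E in H1.
  inversion H1 as [|? z ? ? Hxz Hzy]; subst.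
  apply walk0_eq in Hzy. subst. exact Hxz.
Qed.

Lemma dist_adj A x y : A x y -> x <> y -> dist A x y = 1.
Proof.
  intros Hxy N.
  assert (H1 : walk A x y 1) by exact (walk_cons A x y y 0 Hxy (walk_nil A y)).
  pose proof (dist_le A x y 1 H1).
  destruct (dist A x y) eqn:E; [|lia]. exfalso. exact (N (dist_eq0 A x y 1 H1 E)).
Qed.

Lemma dist_triangle A x y z : connected A ->
  dist A x z <= dist A x y + dist A y z.
Proof.
  intro HA. destruct (HA x y) as [n Hxy], (HA y z) as [m Hyz].
  apply dist_le with (n := dist A x y + dist A y z).
  apply walk_cat with y; eapply dist_walk; eauto.
Qed.

Lemma dist_ext {U : Type} A (B : U -> U -> Prop) x y x' y' :
  (forall n, walk A x y n <-> walk B x' y' n) -> dist A x y = dist B x' y'.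
Proof.
  intro H. unfold dist. f_equal.
  apply functional_extensionality. intro n. apply propositional_extensionality.
  split; intros [Hn Hmin]; split; try apply H, Hn;
    intros m Hm; apply Hmin, H, Hm.
Qed.

Lemma dist_restrict P A B :
  (forall x y, P x -> A x y -> B x y /\ P y) ->
  (forall x y, P x -> B x y -> A x y /\ P y) ->
  forall x y, P x -> dist A x y = dist B x y.
Proof.
  intros HAB HBA x y Px. apply dist_ext. intro n.
  split; apply walk_restrict with P; auto.
Qed.

End Walks.

Section CartesianDistance.
Context {V W : Type} (A : V -> V -> Prop) (B : W -> W -> Prop).

Lemma walk_cartesian_fst a c b n :
  walk A a c n -> walk (cartesian A B) (a, b) (c, b) n.
Proof.
  intro H. apply (walk_map A _ (fun x => (x, b))); auto.
  intros x y Hxy. right. simpl. auto.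
Qed.

Lemma walk_cartesian_snd a b d n :
  walk B b d n -> walk (cartesian A B) (a, b) (a, d) n.
Proof.
  intro H. apply (walk_map B _ (fun y => (a, y))); auto.
  intros x y Hxy. left. simpl. auto.
Qed.

Lemma walk_cartesian a b c d n1 n2 :
  walk A a c n1 -> walk B b d n2 -> walk (cartesian A B) (a, b) (c, d) (n1 + n2).
Proof.
  intros H1 H2. apply walk_cat with (c, b).
  - apply walk_cartesian_fst, H1.
  - apply walk_cartesian_snd, H2.
Qed.

Lemma walk_cartesian_split u v n : walk (cartesian A B) u v n ->
  exists n1 n2, walk A (fst u) (fst v) n1 /\ walk B (snd u) (snd v) n2 /\ n1 + n2 = n.
Proof.
  induction 1 as [|x z y n Hxz _ IH].
  - exists 0, 0. repeat split; apply walk_nil.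
  - destruct IH as (n1 & n2 & H1 & H2 & E).
    destruct Hxz as [[E1 Hs]|[E2 Hf]].
    + exists n1, (S n2). rewrite E1. repeat split; auto.
      * eapply walk_cons; eauto.
      * lia.
    + exists (S n1), n2. rewrite E2. repeat split; auto.
      * eapply walk_cons; eauto.
      * lia.
Qed.

Lemma dist_cartesian a b c d n1 n2 :
  walk A a c n1 -> walk B b d n2 ->
  dist (cartesian A B) (a, b) (c, d) = dist A a c + dist B b d.
Proof.
  intros H1 H2. apply dist_least_walk.
  - apply walk_cartesian; eapply dist_walk; eauto.
  - intros m Hm. destruct (walk_cartesian_split _ _ _ Hm) as (m1 & m2 & K1 & K2 & E).
    pose proof (dist_le _ _ _ _ K1). pose proof (dist_le _ _ _ _ K2). simpl in *. lia.
Qed.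

Lemma dist_cartesian_connected u v : connected A -> connected B ->
  dist (cartesian A B) u v = dist A (fst u) (fst v) + dist B (snd u) (snd v).
Proof.
  intros HA HB. destruct u as [a b], v as [c d].
  destruct (HA a c) as [n1 H1], (HB b d) as [n2 H2].
  exact (dist_cartesian a b c d n1 n2 H1 H2).
Qed.

End CartesianDistance.

Lemma cartesian_common_neighbor_fst {V W : Type} (A : V -> V -> Prop) (B : W -> W -> Prop)
  u v y w : (forall b, ~ B b b) -> u <> v ->
  cartesian A B (u, y) w -> cartesian A B w (v, y) ->
  snd w = y /\ A u (fst w) /\ A (fst w) v.
Proof.
  intros irrB N. destruct w as [w1 w2]. unfold cartesian; simpl.
  intros [[E1 H1]|[E1 H1]] [[E2 H2]|[E2 H2]]; subst; auto.
  - contradiction.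
  - exfalso. exact (irrB _ H1).
  - exfalso. exact (irrB _ H2).
Qed.

Definition prod_set {V W : Type} (X1 : V -> Prop) (X2 : W -> Prop) : V * W -> Prop :=
  fun z => X1 (fst z) /\ X2 (snd z).

Section InducedProduct.
Context {V W : Type} (A : V -> V -> Prop) (B : W -> W -> Prop).
Variables (X1 : V -> Prop) (X2 : W -> Prop).

Lemma induced_cartesian_prod_set u v : prod_set X1 X2 u ->
  (induced (cartesian A B) (prod_set X1 X2) u v <->
   cartesian (induced A X1) (induced B X2) u v).
Proof.
  destruct u as [u1 u2], v as [v1 v2].
  unfold induced, cartesian, prod_set; simpl. intros [Hu1 Hu2].
  split.
  - intros (_ & [Hv1 Hv2] & [[E Hs]|[E Hf]]); auto.
  - intros [[E Hs]|[E Hf]]; subst; tauto.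
Qed.

Lemma cartesian_induced_prod_set_closed u v : prod_set X1 X2 u ->
  cartesian (induced A X1) (induced B X2) u v -> prod_set X1 X2 v.
Proof.
  intros [Hu1 Hu2] [[E (_ & Hv2 & _)]|[E (_ & Hv1 & _)]]; split; congruence.
Qed.

Lemma dist_induced_prod_set u v n1 n2 :
  walk (induced A X1) (fst u) (fst v) n1 -> walk (induced B X2) (snd u) (snd v) n2 ->
  prod_set X1 X2 u ->
  dist (induced (cartesian A B) (prod_set X1 X2)) u v =
  dist (induced A X1) (fst u) (fst v) + dist (induced B X2) (snd u) (snd v).
Proof.
  intros H1 H2 Hu. rewrite (dist_restrict (prod_set X1 X2) _
    (cartesian (induced A X1) (induced B X2))); auto.
  - destruct u, v. simpl in *. eapply dist_cartesian; eauto.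
  - intros x y Hx Hxy. split; [apply induced_cartesian_prod_set; auto| apply Hxy].
  - intros x y Hx Hxy. split; [apply induced_cartesian_prod_set; auto|].
    exact (cartesian_induced_prod_set_closed x y Hx Hxy).
Qed.

Lemma walk_induced_prod_set_fst u v n :
  walk (induced (cartesian A B) (prod_set X1 X2)) u v n ->
  exists m, walk (induced A X1) (fst u) (fst v) m.
Proof.
  induction 1 as [x|x z y n Hxz _ [m Hm]]; [exists 0; apply walk_nil|].
  destruct Hxz as ([Hx1 _] & [Hz1 _] & [[E _]|[_ Hf]]).
  - rewrite E. exists m. exact Hm.
  - exists (S m). eapply walk_cons; [|exact Hm]. repeat split; assumption.
Qed.

Lemma connected_on_prod_set : connected_on A X1 -> connected_on B X2 ->
  connected_on (cartesian A B) (prod_set X1 X2).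
Proof.
  intros Hc1 Hc2 [u1 u2] [v1 v2] [Hu1 Hu2] [Hv1 Hv2].
  destruct (Hc1 _ _ Hu1 Hv1) as [n1 W1], (Hc2 _ _ Hu2 Hv2) as [n2 W2].
  exists (n1 + n2).
  apply walk_restrict with (P := prod_set X1 X2)
    (A := cartesian (induced A X1) (induced B X2)).
  - intros x y Hx Hxy. split; [apply induced_cartesian_prod_set; assumption|].
    exact (cartesian_induced_prod_set_closed x y Hx Hxy).
  - split; assumption.
  - apply walk_cartesian; assumption.
Qed.

End InducedProduct.

Section Isomorphism.
Context {V U : Type} (f : V -> U) (g : U -> V).
Hypotheses (fK : forall x, g (f x) = x) (gK : forall u, f (g u) = u).

Lemma walk_iso (A : V -> V -> Prop) (B : U -> U -> Prop) :
  (forall x y, B (f x) (f y) <-> A x y) ->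
  forall x y n, walk B (f x) (f y) n <-> walk A x y n.
Proof.
  intros HAB x y n. split.
  - intro H. rewrite <- (fK x), <- (fK y).
    apply (walk_map B A g); auto.
    intros u v Huv. apply HAB. rewrite !gK. exact Huv.
  - apply walk_map. intros u v. apply HAB.
Qed.

Lemma dist_iso (A : V -> V -> Prop) (B : U -> U -> Prop) :
  (forall x y, B (f x) (f y) <-> A x y) ->
  forall x y, dist B (f x) (f y) = dist A x y.
Proof. intros HAB x y. apply dist_ext. intro n. apply walk_iso, HAB. Qed.

Variables (A : V -> V -> Prop) (B : U -> U -> Prop).
Hypothesis f_adj : forall x y, B (f x) (f y) <-> A x y.

Lemma induced_iso (X : V -> Prop) x y :
  induced B (fun u => X (g u)) (f x) (f y) <-> induced A X x y.
Proof. unfold induced. rewrite !fK, f_adj. tauto. Qed.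

Lemma boolean_gated_iso X : boolean_gated A X -> boolean_gated B (fun u => X (g u)).
Proof.
  pose proof (dist_iso _ _ (induced_iso X)) as Dind.
  intros [[[x0 Hx0] Hgate] [Hconn Hthick]]. repeat split.
  - exists (f x0). rewrite fK. exact Hx0.
  - intro u. rewrite <- (gK u). destruct (Hgate (g u)) as [y [Hy Hdist]].
    exists (f y). rewrite fK. split; [exact Hy|].
    intros z Hz. rewrite <- (gK z), !(dist_iso _ _ f_adj). exact (Hdist _ Hz).
  - intros u v Hu Hv. destruct (Hconn _ _ Hu Hv) as [n Hn]. exists n.
    rewrite <- (gK u), <- (gK v). apply (walk_iso _ _ (induced_iso X)), Hn.
  - intros u v Hu Hv. rewrite <- (gK u), <- (gK v), Dind. intro E.
    destruct (Hthick _ _ Hu Hv E) as (w & w' & Hw & Hw' & H1 & H2 & H3 & H4 & E').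
    exists (f w), (f w'). rewrite !induced_iso, !fK, Dind. auto 10.
Qed.

Lemma thickening_iso x y : thickening A x y -> thickening B (f x) (f y).
Proof.
  intros [N [X [HX [Hx Hy]]]]. split.
  - intro E. apply N. rewrite <- (fK x), <- (fK y), E. reflexivity.
  - exists (fun u => X (g u)). rewrite !fK. auto using boolean_gated_iso.
Qed.

End Isomorphism.

Definition swap {V W : Type} (p : V * W) : W * V := (snd p, fst p).

Lemma swapK {V W : Type} (p : V * W) : swap (swap p) = p.
Proof. destruct p. reflexivity. Qed.

Lemma cartesian_swap {V W : Type} (A : V -> V -> Prop) (B : W -> W -> Prop) p q :
  cartesian B A (swap p) (swap q) <-> cartesian A B p q.
Proof. unfold cartesian, swap. simpl. tauto. Qed.

Lemma thickening_cartesian_swap {V W : Type} (A : V -> V -> Prop) (B : W -> W -> Prop) p q :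
  thickening (cartesian A B) p q -> thickening (cartesian B A) (swap p) (swap q).
Proof. apply thickening_iso with swap; auto using swapK, cartesian_swap. Qed.

Lemma boolean_gated_singleton {V : Type} (A : V -> V -> Prop) x :
  boolean_gated A (fun y => y = x).
Proof.
  repeat split.
  - exists x. reflexivity.
  - intro y. exists x. split; [reflexivity|]. intros z ->. rewrite dist_refl. lia.
  - intros u v -> ->. exists 0. apply walk_nil.
  - intros u v -> ->. rewrite dist_refl. discriminate.
Qed.

Lemma eq_or_thickening_boolean_gated {V : Type} (A : V -> V -> Prop) x y :
  x = y \/ thickening A x y -> exists X, boolean_gated A X /\ X x /\ X y.
Proof.
  intros [<-|[_ HX]]; [|exact HX].
  exists (fun y => y = x). auto using boolean_gated_singleton.
Qed.

Section ConnectedSimpleGraphs.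
Context {V W : Type} (aG : V -> V -> Prop) (aH : W -> W -> Prop).
Hypotheses (connG : connected aG) (connH : connected aH)
  (simpleG : simple_graph aG) (simpleH : simple_graph aH).

Notation C := (cartesian aG aH).

Lemma dist_C u v : dist C u v = dist aG (fst u) (fst v) + dist aH (snd u) (snd v).
Proof. apply dist_cartesian_connected; assumption. Qed.

Lemma gated_cartesian_rectangle X a b c d :
  gated C X -> X (a, b) -> X (c, d) -> X (a, d).
Proof.
  intros [_ Hgate] Hab Hcd. destruct (Hgate (a, d)) as [[g1 g2] [Hg Hdist]].
  pose proof (Hdist _ Hab) as E1. pose proof (Hdist _ Hcd) as E2.
  rewrite !dist_C in E1, E2. simpl in E1, E2. rewrite dist_refl in E1. rewrite dist_refl in E2.
  pose proof (dist_triangle aH d g2 b connH). pose proof (dist_triangle aG a g1 c connG).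
  destruct (connG a g1) as [n Hn], (connH d g2) as [m Hm].
  rewrite (dist_eq0 aG a g1 n Hn), (dist_eq0 aH d g2 m Hm) by lia. exact Hg.
Qed.

Lemma gated_cartesian_prod_set X : gated C X ->
  X = prod_set (fun a => exists b, X (a, b)) (fun b => exists a, X (a, b)).
Proof.
  intro HX. apply functional_extensionality. intros [a b].
  apply propositional_extensionality. unfold prod_set; simpl. split.
  - intro Hab. split; eexists; exact Hab.
  - intros [[d Had] [c Hcb]]. exact (gated_cartesian_rectangle X a d c b HX Had Hcb).
Qed.

Section Projection.
Variables (X1 : V -> Prop) (X2 : W -> Prop) (y0 : W).
Hypothesis Hy0 : X2 y0.

Lemma gated_prod_set_fst : gated C (prod_set X1 X2) -> gated aG X1.
Proof.
  intros [[[a b] [Ha _]] Hgate]. split; [exists a; exact Ha|].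
  intro x. destruct (Hgate (x, y0)) as [[g1 g2] [[Hg1 Hg2] Hdist]].
  exists g1. split; [exact Hg1|]. intros z Hz.
  assert (E := Hdist (z, g2) (conj Hz Hg2)).
  rewrite !dist_C in E. simpl in E. rewrite dist_refl in E. lia.
Qed.

Lemma connected_on_prod_set_fst : connected_on C (prod_set X1 X2) -> connected_on aG X1.
Proof.
  intros Hconn u v Hu Hv.
  destruct (Hconn (u, y0) (v, y0) (conj Hu Hy0) (conj Hv Hy0)) as [n Hn].
  exact (walk_induced_prod_set_fst aG aH X1 X2 _ _ _ Hn).
Qed.

Lemma dist_induced_prod_set_fst u v : connected_on aG X1 -> X1 u -> X1 v ->
  dist (induced C (prod_set X1 X2)) (u, y0) (v, y0) = dist (induced aG X1) u v.
Proof.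
  intros Hconn Hu Hv. destruct (Hconn u v Hu Hv) as [n Hn].
  rewrite (dist_induced_prod_set aG aH X1 X2 (u, y0) (v, y0) n 0); simpl; auto.
  - rewrite dist_refl. lia.
  - apply walk_nil.
  - split; assumption.
Qed.

Lemma thick_on_prod_set_fst : connected_on aG X1 ->
  thick_on C (prod_set X1 X2) -> thick_on aG X1.
Proof.
  intros Hconn Hthick u v Hu Hv E.
  assert (N : u <> v) by (intros ->; rewrite dist_refl in E; discriminate).
  rewrite <- dist_induced_prod_set_fst in E by assumption.
  destruct (Hthick (u, y0) (v, y0) (conj Hu Hy0) (conj Hv Hy0) E)
    as (w & w' & [Hw1 _] & [Hw1' _] & (_ & _ & H1) & (_ & _ & H2) & (_ & _ & H3)
        & (_ & _ & H4) & E').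
  destruct (cartesian_common_neighbor_fst aG aH u v y0 w (proj2 simpleH) N H1 H2)
    as (Ew & A1 & A2).
  destruct (cartesian_common_neighbor_fst aG aH u v y0 w' (proj2 simpleH) N H3 H4)
    as (Ew' & A3 & A4).
  destruct w as [w1 w2], w' as [w1' w2']. simpl in *. subst w2 w2'.
  exists w1, w1'. unfold induced.
  rewrite dist_induced_prod_set_fst in E' by assumption. tauto.
Qed.

Lemma boolean_gated_prod_set_fst : boolean_gated C (prod_set X1 X2) -> boolean_gated aG X1.
Proof.
  intros [Hgate [Hconn Hthick]].
  assert (Hconn1 := connected_on_prod_set_fst Hconn).
  split; [|split]; auto using gated_prod_set_fst, thick_on_prod_set_fst.
Qed.

End Projection.

Lemma thickening_cartesian_fst p q :
  thickening C p q -> fst p <> fst q -> thickening aG (fst p) (fst q).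
Proof.
  intros [_ [X [HX [Hp Hq]]]] N. split; [exact N|].
  pose proof (gated_cartesian_prod_set X (proj1 HX)) as EX.
  rewrite EX in HX, Hp, Hq.
  exists (fun a => exists b, X (a, b)). split; [|exact (conj (proj1 Hp) (proj1 Hq))].
  exact (boolean_gated_prod_set_fst _ _ (snd p) (proj2 Hp) HX).
Qed.

Lemma gated_prod_set X1 X2 : gated aG X1 -> gated aH X2 -> gated C (prod_set X1 X2).
Proof.
  intros [[a Ha] Hgate1] [[b Hb] Hgate2]. split; [exists (a, b); split; assumption|].
  intros [x1 x2]. destruct (Hgate1 x1) as [g1 [Hg1 Hd1]], (Hgate2 x2) as [g2 [Hg2 Hd2]].
  exists (g1, g2). split; [split; assumption|].
  intros [z1 z2] [Hz1 Hz2]. rewrite !dist_C. simpl in *.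
  rewrite (Hd1 _ Hz1), (Hd2 _ Hz2). lia.
Qed.

Lemma thick_on_prod_set X1 X2 : connected_on aG X1 -> connected_on aH X2 ->
  thick_on aG X1 -> thick_on aH X2 -> thick_on C (prod_set X1 X2).
Proof.
  intros Hc1 Hc2 Ht1 Ht2.
  assert (D : forall w w', prod_set X1 X2 w -> prod_set X1 X2 w' ->
    dist (induced C (prod_set X1 X2)) w w' =
    dist (induced aG X1) (fst w) (fst w') + dist (induced aH X2) (snd w) (snd w')).
  { intros w w' [Hw1 Hw2] [Hw1' Hw2'].
    destruct (Hc1 _ _ Hw1 Hw1') as [n1 W1], (Hc2 _ _ Hw2 Hw2') as [n2 W2].
    exact (dist_induced_prod_set aG aH X1 X2 w w' n1 n2 W1 W2 (conj Hw1 Hw2)). }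
  intros [u1 u2] [v1 v2] [Hu1 Hu2] [Hv1 Hv2]. simpl in Hu1, Hu2, Hv1, Hv2.
  rewrite D by (split; assumption). simpl. intro E.
  destruct (Hc1 _ _ Hu1 Hv1) as [n1 W1], (Hc2 _ _ Hu2 Hv2) as [n2 W2].
  assert (Cases : (dist (induced aG X1) u1 v1 = 0 /\ dist (induced aH X2) u2 v2 = 2) \/
                  (dist (induced aG X1) u1 v1 = 1 /\ dist (induced aH X2) u2 v2 = 1) \/
                  (dist (induced aG X1) u1 v1 = 2 /\ dist (induced aH X2) u2 v2 = 0)) by lia.
  destruct Cases as [[D1 D2]|[[D1 D2]|[D1 D2]]].
  - apply (dist_eq0 _ _ _ _ W1) in D1. subst v1.
    destruct (Ht2 _ _ Hu2 Hv2 D2) as (w & w' & Hw & Hw' & A1 & A2 & A3 & A4 & E').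
    exists (u1, w), (u1, w').
    rewrite D by (split; assumption). simpl. rewrite dist_refl.
    unfold induced, cartesian, prod_set in *. simpl. tauto.
  - pose proof (dist_eq1 _ _ _ _ W1 D1) as A1. pose proof (dist_eq1 _ _ _ _ W2 D2) as A2.
    assert (N1 : v1 <> u1) by (intros ->; rewrite dist_refl in D1; discriminate).
    assert (N2 : u2 <> v2) by (intros ->; rewrite dist_refl in D2; discriminate).
    assert (A1' : induced aG X1 v1 u1).
    { destruct A1 as (Hu & Hv & A). repeat split; auto. apply simpleG, A. }
    exists (v1, u2), (u1, v2).
    rewrite D by (split; assumption). simpl.
    rewrite (dist_adj _ _ _ A1' N1), (dist_adj _ _ _ A2 N2).
    unfold induced, cartesian, prod_set in *. simpl. tauto.
  - apply (dist_eq0 _ _ _ _ W2) in D2. subst v2.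
    destruct (Ht1 _ _ Hu1 Hv1 D1) as (w & w' & Hw & Hw' & A1 & A2 & A3 & A4 & E').
    exists (w, u2), (w', u2).
    rewrite D by (split; assumption). simpl. rewrite dist_refl.
    unfold induced, cartesian, prod_set in *. simpl. rewrite <- plus_n_O. tauto.
Qed.

Lemma boolean_gated_prod_set X1 X2 : boolean_gated aG X1 -> boolean_gated aH X2 ->
  boolean_gated C (prod_set X1 X2).
Proof.
  intros [Hg1 [Hc1 Ht1]] [Hg2 [Hc2 Ht2]].
  split; [|split]; auto using gated_prod_set, connected_on_prod_set, thick_on_prod_set.
Qed.

End ConnectedSimpleGraphs.

Theorem thickening_cartesian {V W : Type} (aG : V -> V -> Prop) (aH : W -> W -> Prop) :
  connected aG -> connected aH -> simple_graph aG -> simple_graph aH ->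
  forall p q, thickening (cartesian aG aH) p q <-> strong (thickening aG) (thickening aH) p q.
Proof.
  intros connG connH simpleG simpleH p q. split.
  - intro T. split; [apply T|]. split.
    + destruct (classic (fst p = fst q)) as [E|N]; [left; exact E|right].
      apply thickening_cartesian_fst with aH; assumption.
    + destruct (classic (snd p = snd q)) as [E|N]; [left; exact E|right].
      apply (thickening_cartesian_fst aH aG) with (p := swap p) (q := swap q);
        auto using thickening_cartesian_swap.
  - intros [N [H1 H2]].
    destruct (eq_or_thickening_boolean_gated _ _ _ H1) as (X1 & B1 & P1 & Q1).
    destruct (eq_or_thickening_boolean_gated _ _ _ H2) as (X2 & B2 & P2 & Q2).
    split; [exact N|]. exists (prod_set X1 X2).
    split; [apply boolean_gated_prod_set|split; split]; assumption.
Qed.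

Theorem lemma2p18 (V W : Type) (aG : V -> V -> Prop) (aH : W -> W -> Prop) :
  swm aG -> swm aH ->
  forall p q : V * W,
    thickening (cartesian aG aH) p q <-> strong (thickening aG) (thickening aH) p q.
Proof.
  intros [[simpleG [connG _]] _] [[simpleH [connH _]] _].
  apply thickening_cartesian; assumption.
Qed.
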